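(* Let $p\ge1$, $m\in\mathbb{N}$, $a,b>0$, $\beta\in\mathbb{R}^p$, let $f=(1,f_1,\ldots,f_{p-1})^T$ be arbitrary regression functions on a design region $\mathcal{X}$, let $A$ be a real $p\times s$ matrix of rank $s$ and $B=AA^T$. Then a design $\xi^*$ is $L$-optimal (with respect to $B$) in the Poisson–Gamma model if and only if $\xi^*$ is $L$-optimal (with respect to $B$) in the Poisson model. In particular, for any $c\in\mathbb{R}^p\setminus\{0\}$, $\xi^*$ is $c$-optimal in the Poisson–Gamma model if and only if it is $c$-optimal in the Poisson model.
   Context: A design $\xi$ is a probability measure on $\mathcal{X}$ with finite support $x_1,\ldots,x_l$ and weights $w_1,\ldots,w_l\ge0$, $\sum_j w_j=1$. The Poisson information matrix is $M_{Po}(\xi;\beta)=\sum_{j=1}^l w_j\exp(f(x_j)^T\beta)f(x_j)f(x_j)^T$, and the Poisson–Gamma information matrix is $M(\xi;\beta)=\frac{a}{b}\Bigl(M_{Po}(\xi;\beta)-\frac{M_{Po}(\xi;\beta)e_1e_1^TM_{Po}(\xi;\beta)}{e_1^TM_{Po}(\xi;\beta)e_1+b/m}\Bigr)$, $e_1$ the first standard unit vector of $\mathbb{R}^p$. For a model with information matrix $N(\xi)$ (either $M$ or $M_{Po}$), $A^T\beta$ is identifiable for $\xi$ if $A=N(\xi)H$ for some $H\in\mathbb{R}^{p\times s}$. A design $\xi^*$ is $L$-optimal with respect to $B=AA^T$ if $A^T\beta$ is identifiable for $\xi^*$ and $\operatorname{tr}(N(\xi^* )^-B)\le\operatorname{tr}(N(\xi)^-B)$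 for all designs $\xi$ for which $A^T\beta$ is identifiable ($^-$ a generalized inverse). $c$-optimality is the special case $A=c$, $B=cc^T$, with criterion $c^TN(\xi)^-c$. *)

From HB Require Import structures.
From mathcomp Require Import all_boot all_order all_algebra.
From mathcomp Require Import reals.
From mathcomp Require Import sequences exp.
Set Implicit Arguments. Unset Strict Implicit. Unset Printing Implicit Defensive.
Import Order.TTheory GRing.Theory Num.Theory.
Local Open Scope ring_scope.

Record design (X : Type) (R : realType) := Design {
  dsize : nat;
  dpts : 'I_dsize -> X;
  dwts : 'I_dsize -> R;
  dwts_ge0 : forall j, 0 <= dwts j;
  dwts_sum1 : \sum_j dwts j = 1 }.
Arguments dsize {X R} d.
Arguments dpts {X R} d _.
Arguments dwts {X R} d _.

Section Info.
Variables (X : Type) (R : realType) (p : nat).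

Definition e1 : 'cV[R]_p.+1 := delta_mx ord0 0.

Definition M_Po (f : X -> 'cV[R]_p.+1) (beta : 'cV[R]_p.+1) (xi : design X R)
  : 'M[R]_p.+1 :=
  \sum_(j < dsize xi)
     (dwts xi j * expR (((f (dpts xi j))^T *m beta) 0 0))
       *: (f (dpts xi j) *m (f (dpts xi j))^T).

Definition M_PG (a b : R) (m : nat) (f : X -> 'cV[R]_p.+1)
  (beta : 'cV[R]_p.+1) (xi : design X R) : 'M[R]_p.+1 :=
  let Mp := M_Po f beta xi in
  (a / b) *: (Mp - ((e1^T *m Mp *m e1) 0 0 + b / m%:R)^-1
                     *: (Mp *m e1 *m e1^T *m Mp)).

Definition is_ginv (N G : 'M[R]_p.+1) : Prop := N *m G *m N = N.

(* A^T beta is identifiable for xi in the model with information matrix N *)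
Definition identifiable (s : nat) (N : design X R -> 'M[R]_p.+1)
  (A : 'M[R]_(p.+1, s)) (xi : design X R) : Prop :=
  exists H : 'M[R]_(p.+1, s), A = N xi *m H.

(* L-optimality w.r.t. B = A A^T; the criterion tr(N^- B) is compared for
   arbitrary choices of generalized inverses. *)
Definition L_optimal (s : nat) (N : design X R -> 'M[R]_p.+1)
  (A : 'M[R]_(p.+1, s)) (xi_star : design X R) : Prop :=
  identifiable N A xi_star /\
  forall xi : design X R, identifiable N A xi ->
  forall Gs G : 'M[R]_p.+1, is_ginv (N xi_star) Gs -> is_ginv (N xi) G ->
    \tr (Gs *m (A *m A^T)) <= \tr (G *m (A *m A^T)).

Definition c_optimal (N : design X R -> 'M[R]_p.+1) (c : 'cV[R]_p.+1)
  (xi_star : design X R) : Prop :=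
  identifiable N c xi_star /\
  forall xi : design X R, identifiable N c xi ->
  forall Gs G : 'M[R]_p.+1, is_ginv (N xi_star) Gs -> is_ginv (N xi) G ->
    (c^T *m Gs *m c) 0 0 <= (c^T *m G *m c) 0 0.

End Info.

(* Write M_PG = c (M_Po - k^-1 M_Po e e^T M_Po) with e = e1, c = a/b, d = b/m and
   k = e^T M_Po e + d > 0.  Then M_PG = c M_Po P with P = 1 - k^-1 e e^T M_Po
   invertible (its inverse is 1 + d^-1 e e^T M_Po), so both information
   matrices have the same range and identify the same A^T beta.  For a
   symmetric N and A = N H the criterion tr(N^- A A^T) = tr(A^T H) does not
   depend on the generalized inverse, and writing A = M_PG (c^-1 P^-1 H) shows
   tr(M_PG^- B) = c^-1 (tr(M_Po^- B) + d^-1 tr(A^T e e^T A)): the two criteria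
   differ by a positive factor and an additive constant independent of the
   design, so they have the same minimizers. *)
From HB Require Import structures.
From mathcomp Require Import all_boot all_order all_algebra.
From mathcomp Require Import reals.
From mathcomp Require Import sequences exp.
From mathcomp Require Import ring.
Set Implicit Arguments. Unset Strict Implicit. Unset Printing Implicit Defensive.
Import Order.TTheory GRing.Theory Num.Theory.
Local Open Scope ring_scope.

Section GeneralizedInverse.
Variables (F : fieldType) (n : nat).

Lemma pinvmx_ginv (N : 'M[F]_n) : N *m pinvmx N *m N = N.
Proof. by rewrite mulmxKpV. Qed.

Lemma mxtrace_ginv_range s (N G : 'M[F]_n) (A H : 'M[F]_(n, s)) :
  N^T = N -> N *m G *m N = N -> A = N *m H ->
  \tr (G *m (A *m A^T)) = \tr (A^T *m H).
Proof.
move=> N_sym G_ginv ->.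
rewrite trmx_mul N_sym !mulmxA mxtrace_mulC !mulmxA G_ginv.
by rewrite mxtrace_mulC mulmxA.
Qed.

End GeneralizedInverse.

Definition downdate (F : fieldType) n (c d : F) (e : 'cV[F]_n) (N : 'M[F]_n)
  : 'M[F]_n :=
  c *: (N - ((e^T *m N *m e) 0 0 + d)^-1 *: (N *m e *m e^T *m N)).

Section Downdate.
Variables (F : fieldType) (n : nat) (c d : F) (e : 'cV[F]_n) (N : 'M[F]_n).
Hypotheses (c_neq0 : c != 0) (d_neq0 : d != 0).

Let t := (e^T *m N *m e) 0 0.
Let E := e *m e^T *m N.
Let P := 1%:M - (t + d)^-1 *: E.
Let Q := 1%:M + d^-1 *: E.

Hypothesis td_neq0 : t + d != 0.

Lemma downdate_factor : downdate c d e N = c *: (N *m P).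
Proof. by rewrite /downdate mulmxBr mulmx1 -scalemxAr /E !mulmxA. Qed.

Lemma downdate_mulV : P *m Q = 1%:M.
Proof.
have EE : E *m E = t *: E.
  have eNe : e^T *m (N *m e) = t%:M by rewrite mulmxA [LHS]mx11_scalar.
  rewrite /E -!mulmxA (mulmxA N e) (mulmxA e^T (N *m e)) eNe.
  by rewrite mul_scalar_mx -!scalemxAr.
rewrite /P /Q mulmxBl !mulmxDr !mul1mx !mulmx1 -!scalemxAr -!scalemxAl EE.
rewrite !scalerA.
have -> : d^-1 / (t + d) * t = d^-1 - (t + d)^-1.
  by field; rewrite td_neq0 d_neq0.
by rewrite -scalerDl [(t + d)^-1 + _]addrC subrK addrK.
Qed.

Lemma downdate_witness s (A H : 'M[F]_(n, s)) :
  A = N *m H -> A = downdate c d e N *m (c^-1 *: (Q *m H)).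
Proof.
move=> ->; rewrite downdate_factor -scalemxAl -scalemxAr scalerA mulfV //.
by rewrite scale1r !mulmxA -(mulmxA N) downdate_mulV mulmx1.
Qed.

Lemma downdate_range s (A : 'M[F]_(n, s)) :
  (exists H, A = downdate c d e N *m H) <-> (exists H, A = N *m H).
Proof.
split=> [[H ->]|[H /downdate_witness]]; last by exists (c^-1 *: (Q *m H)).
by exists (c *: (P *m H)); rewrite downdate_factor -scalemxAl -scalemxAr mulmxA.
Qed.

Hypothesis N_sym : N^T = N.

Lemma downdate_sym : (downdate c d e N)^T = downdate c d e N.
Proof.
rewrite /downdate linearZ linearB linearZ /= N_sym !trmx_mul !trmxK N_sym.
by rewrite !mulmxA.
Qed.

Lemma mxtrace_ginv_downdate s (A H : 'M[F]_(n, s)) (G GN : 'M[F]_n) :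
  A = N *m H ->
  downdate c d e N *m G *m downdate c d e N = downdate c d e N ->
  N *m GN *m N = N ->
  \tr (G *m (A *m A^T)) =
  c^-1 * (\tr (GN *m (A *m A^T)) + d^-1 * \tr (A^T *m e *m e^T *m A)).
Proof.
move=> A_range G_ginv GN_ginv.
rewrite (mxtrace_ginv_range downdate_sym G_ginv (downdate_witness A_range)).
rewrite (mxtrace_ginv_range N_sym GN_ginv A_range).
rewrite -scalemxAr mxtraceZ /Q mulmxDl mul1mx mulmxDr mxtraceD.
by rewrite -scalemxAl -scalemxAr mxtraceZ /E -!mulmxA -A_range !mulmxA.
Qed.

End Downdate.

Section OptimalityTransfer.
Variables (X : Type) (R : realType) (p s : nat).
Variables (N1 N2 : design X R -> 'M[R]_p.+1) (A : 'M[R]_(p.+1, s)).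
Variables (alpha beta : R).
Hypothesis alpha_gt0 : 0 < alpha.
Hypothesis identifiable_iff :
  forall xi, identifiable N1 A xi <-> identifiable N2 A xi.
Hypothesis criterion_affine :
  forall xi, identifiable N2 A xi ->
  forall G1 G2, is_ginv (N1 xi) G1 -> is_ginv (N2 xi) G2 ->
  \tr (G1 *m (A *m A^T)) = alpha * (\tr (G2 *m (A *m A^T)) + beta).

Lemma L_optimal_transfer xs : L_optimal N1 A xs <-> L_optimal N2 A xs.
Proof.
have ginvP (N : 'M[R]_p.+1) : is_ginv N (pinvmx N) by exact: pinvmx_ginv.
split=> [][xs_id xs_opt]; split=> [|xi xi_id Gs G Gs_ginv G_ginv].
- by apply/identifiable_iff.
- have xs_id2 := proj1 (identifiable_iff xs) xs_id.
  rewrite -(ler_pM2l alpha_gt0) -(lerD2r (alpha * beta)) -!mulrDr.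
  rewrite -(criterion_affine xs_id2 (ginvP _) Gs_ginv).
  rewrite -(criterion_affine xi_id (ginvP _) G_ginv).
  exact: xs_opt xi (proj2 (identifiable_iff xi) xi_id) _ _ (ginvP _) (ginvP _).
- by apply/identifiable_iff.
- have xi_id2 := proj1 (identifiable_iff xi) xi_id.
  rewrite (criterion_affine xs_id Gs_ginv (ginvP _)).
  rewrite (criterion_affine xi_id2 G_ginv (ginvP _)).
  by rewrite ler_pM2l // lerD2r; exact: xs_opt xi xi_id2 _ _ (ginvP _) (ginvP _).
Qed.

End OptimalityTransfer.

Lemma c_optimal_L_optimal (X : Type) (R : realType) p
    (N : design X R -> 'M[R]_p.+1) c xs :
  c_optimal N c xs <-> L_optimal N c xs.
Proof.
have crit (G : 'M[R]_p.+1) : (c^T *m G *m c) 0 0 = \tr (G *m (c *m c^T)).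
  by rewrite mulmxA mxtrace_mulC mulmxA trace_mx11.
by split=> [][xs_id xs_opt]; split=> // xi xi_id Gs G Gs_ginv G_ginv;
  move: (xs_opt xi xi_id Gs G Gs_ginv G_ginv); rewrite !crit.
Qed.

Section PoissonGamma.
Variables (X : Type) (R : realType) (p : nat).
Variables (f : X -> 'cV[R]_p.+1) (beta : 'cV[R]_p.+1).

Lemma M_Po_sym xi : (M_Po f beta xi)^T = M_Po f beta xi.
Proof.
rewrite /M_Po linear_sum; apply: eq_bigr => j _.
by rewrite linearZ /= trmx_mul trmxK.
Qed.

Lemma M_Po_quad_ge0 xi (v : 'cV[R]_p.+1) :
  0 <= (v^T *m M_Po f beta xi *m v) 0 0.
Proof.
rewrite /M_Po mulmx_sumr mulmx_suml summxE; apply: sumr_ge0 => j _.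
rewrite -scalemxAr -scalemxAl mxE; apply: mulr_ge0.
  by apply: mulr_ge0; [exact: dwts_ge0 | exact: expR_ge0].
rewrite !mulmxA -(mulmxA _ _ v) -[v^T *m _]trmxK trmx_mul trmxK.
by rewrite mxE big_ord1 mxE -expr2 sqr_ge0.
Qed.

Lemma L_optimal_M_PG a b m s (A : 'M[R]_(p.+1, s)) xs :
  0 < a -> 0 < b -> (0 < m)%N ->
  L_optimal (M_PG a b m f beta) A xs <-> L_optimal (M_Po f beta) A xs.
Proof.
move=> a_gt0 b_gt0 m_gt0.
have c_gt0 : 0 < a / b by rewrite divr_gt0.
have d_gt0 : 0 < b / m%:R by rewrite divr_gt0 // ltr0n.
have c_neq0 := lt0r_neq0 c_gt0; have d_neq0 := lt0r_neq0 d_gt0.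
have td_neq0 xi : ((e1 R p)^T *m M_Po f beta xi *m e1 R p) 0 0 + b / m%:R != 0.
  by rewrite lt0r_neq0 // ltr_wpDl // M_Po_quad_ge0.
have M_PGE xi : M_PG a b m f beta xi
  = downdate (a / b) (b / m%:R) (e1 R p) (M_Po f beta xi) by [].
apply: (L_optimal_transfer (alpha := (a / b)^-1)); first by rewrite invr_gt0.
  by move=> xi; rewrite /identifiable M_PGE; exact: downdate_range.
move=> xi [H A_range] G1 G2; rewrite /is_ginv M_PGE => G1_ginv G2_ginv.
exact: (mxtrace_ginv_downdate c_neq0 d_neq0 (td_neq0 xi) (M_Po_sym xi)
          A_range G1_ginv G2_ginv).
Qed.

End PoissonGamma.

Theorem theorem11 (R : realType) (X : Type) (p s m : nat) (a b : R)
  (beta : 'cV[R]_p.+1) (f : X -> 'cV[R]_p.+1) (A : 'M[R]_(p.+1, s)) :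
  0 < a -> 0 < b -> (0 < m)%N ->
  (forall x : X, f x ord0 0 = 1) ->
  \rank A = s ->
  (forall xi_star : design X R,
     L_optimal (M_PG a b m f beta) A xi_star <-> L_optimal (M_Po f beta) A xi_star) /\
  (forall c : 'cV[R]_p.+1, c != 0 ->
   forall xi_star : design X R,
     c_optimal (M_PG a b m f beta) c xi_star <-> c_optimal (M_Po f beta) c xi_star).
Proof.
move=> a_gt0 b_gt0 m_gt0 _ _; split=> [xs|c _ xs]; first exact: L_optimal_M_PG.
by rewrite !c_optimal_L_optimal; exact: L_optimal_M_PG.
Qed.
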